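(* Let $\phi$ be a Möbius transformation of $\overline{\mathbb{R}}^n$ with $b:=\phi^{-1}(\infty)\in\mathbb{R}^n\setminus\{0\}$, let $S^{n-1}(b,R)$ be its isometric sphere, $\sigma$ the reflection in it, and $a=\sigma(0)$. Let $\Sigma_0$ be a $k$-dimensional affine plane containing $\phi(0)$ and orthogonal to $\phi(\infty)-\phi(a)$. Then for every $0<r<|b|$, $\Sigma_0\cap\phi(B^n_r)$ is a flat $k$-disk of radius $\dfrac{R^2r}{|b|\sqrt{|b|^2-r^2}}$.
   Context: $B^n_r$ is the open ball of radius $r$ centered at $0$. The reflection in $S^{n-1}(b,R)$ is $\sigma(x)=b+\frac{R^2}{|x-b|^2}(x-b)$ for $x\ne b$, $\sigma(b)=\infty$, $\sigma(\infty)=b$. A Möbius transformation is a finite composition of reflections in spheres or hyperplanes; if $\phi(\infty)\ne\infty$ then $\phi=\psi\circ\sigma$ for a unique reflection $\sigma$ in a sphere centered at $\phi^{-1}(\infty)$ (the isometric sphere) and a unique Euclidean isometry $\psi$. *)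

From HB Require Import structures.
From mathcomp Require Import all_boot all_order all_algebra.
From mathcomp Require Import reals.
Set Implicit Arguments. Unset Strict Implicit. Unset Printing Implicit Defensive.
Import Order.TTheory GRing.Theory Num.Theory.
Local Open Scope ring_scope.

Section Mobius.
Variables (R : realType) (n : nat).

(* points of \bar{R}^n : Some x for x in R^n, None for infinity *)
Definition ext := option 'rV[R]_n.

Definition dotv (u v : 'rV[R]_n) : R := (u *m v^T) 0 0.
Definition vnorm (u : 'rV[R]_n) : R := Num.sqrt (dotv u u).

Definition ball0 (r : R) (x : 'rV[R]_n) : Prop := vnorm x < r.

Definition sphere_refl (b : 'rV[R]_n) (R0 : R) (x : ext) : ext :=
  match x with
  | None => Some b
  | Some y => if y == b then None
              else Some (b + (R0 ^+ 2 / (vnorm (y - b)) ^+ 2) *: (y - b))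
  end.

Definition plane_refl (u : 'rV[R]_n) (t : R) (x : ext) : ext :=
  match x with
  | None => None
  | Some y => Some (y - (2 * (dotv y u - t) / dotv u u) *: u)
  end.

Inductive refl_data :=
  | SphereR of 'rV[R]_n & R
  | PlaneR of 'rV[R]_n & R.

Definition refl_valid (d : refl_data) : bool :=
  match d with
  | SphereR _ R0 => 0 < R0
  | PlaneR u _ => u != 0
  end.

Definition refl_apply (d : refl_data) : ext -> ext :=
  match d with
  | SphereR b R0 => sphere_refl b R0
  | PlaneR u t => plane_refl u t
  end.

Definition is_mobius (phi : ext -> ext) : Prop :=
  exists l : seq refl_data,
    [/\ (0 < size l)%N, all refl_valid l &
        forall x, phi x = foldr (fun d f => refl_apply d \o f) id l x].

Definition is_isometry (psi : 'rV[R]_n -> 'rV[R]_n) : Prop :=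
  forall x y, vnorm (psi x - psi y) = vnorm (x - y).

Definition ext_map (psi : 'rV[R]_n -> 'rV[R]_n) (x : ext) : ext :=
  match x with None => None | Some y => Some (psi y) end.

(* the k-dimensional affine plane p + rowspace(V), V : 'M_(k,n) of full row rank *)
Definition in_aplane k (p : 'rV[R]_n) (V : 'M[R]_(k, n)) (x : 'rV[R]_n) : bool :=
  ((x - p) <= V)%MS.

End Mobius.

(* Write phi = psi o sigma.  Since psi is an isometry and Sigma_0 passes through
   psi(a) orthogonally to psi(b) - psi(0), a point psi(v) lies on Sigma_0 exactly
   when v lies on the hyperplane H through a orthogonal to b.  On H one computes
   |sigma(v)|^2 = |b|^4 D / (|b|^2 D + R^4) with D = |v - a|^2, so |sigma(v)| < r
   is the condition D < R^4 r^2 / (|b|^2 (|b|^2 - r^2)); and |psi(v) - psi(a)| = |v - a|.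
   Hence Sigma_0 /\ phi(B^n_r) is the disk of Sigma_0 centred at phi(0) = psi(a); the
   points of that disk have preimages because phi, a composition of involutions,
   is onto. *)

From HB Require Import structures.
From mathcomp Require Import all_boot all_order all_algebra.
From mathcomp Require Import reals ring.
Set Implicit Arguments. Unset Strict Implicit. Unset Printing Implicit Defensive.
Import Order.TTheory GRing.Theory Num.Theory.
Local Open Scope ring_scope.

Section DotProduct.
Variables (R : realType) (n : nat).
Implicit Types u v w : 'rV[R]_n.

Lemma dotvE u v : dotv u v = \sum_(i < n) u 0 i * v 0 i.
Proof. by rewrite /dotv !mxE; apply: eq_bigr => i _; rewrite !mxE. Qed.

Lemma dotvC u v : dotv u v = dotv v u.
Proof. by rewrite !dotvE; apply: eq_bigr => i _; rewrite mulrC. Qed.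

Lemma dotvDl u v w : dotv (u + v) w = dotv u w + dotv v w.
Proof. by rewrite !dotvE -big_split; apply: eq_bigr => i _; rewrite !mxE mulrDl. Qed.

Lemma dotvBl u v w : dotv (u - v) w = dotv u w - dotv v w.
Proof. by rewrite !dotvE -sumrB; apply: eq_bigr => i _; rewrite !mxE mulrBl. Qed.

Lemma dotvZl c u w : dotv (c *: u) w = c * dotv u w.
Proof. by rewrite !dotvE mulr_sumr; apply: eq_bigr => i _; rewrite !mxE mulrA. Qed.

Lemma dotvDr u v w : dotv w (u + v) = dotv w u + dotv w v.
Proof. by rewrite dotvC dotvDl !(dotvC w). Qed.

Lemma dotvBr u v w : dotv w (u - v) = dotv w u - dotv w v.
Proof. by rewrite dotvC dotvBl !(dotvC w). Qed.

Lemma dotvZr c u w : dotv w (c *: u) = c * dotv w u.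
Proof. by rewrite dotvC dotvZl dotvC. Qed.

Lemma dotv_sqrDZ c u w :
  dotv (u + c *: w) (u + c *: w) = dotv u u + 2 * c * dotv u w + c ^+ 2 * dotv w w.
Proof. by rewrite !dotvDl !dotvDr !dotvZl !dotvZr (dotvC w u); ring. Qed.

Lemma dotv_sqrBZ c u w :
  dotv (u - c *: w) (u - c *: w) = dotv u u - 2 * c * dotv u w + c ^+ 2 * dotv w w.
Proof. by rewrite -scaleNr dotv_sqrDZ sqrrN mulrN mulNr. Qed.

Lemma dotvNN u : dotv (- u) (- u) = dotv u u.
Proof. by rewrite -scaleN1r dotvZl dotvZr !mulN1r opprK. Qed.

Lemma dotv_ge0 u : 0 <= dotv u u.
Proof. by rewrite dotvE sumr_ge0 // => i _; rewrite -expr2 sqr_ge0. Qed.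

Lemma dotv_eq0 u : (dotv u u == 0) = (u == 0).
Proof.
apply/idP/idP => [|/eqP->]; last by rewrite dotvE big1 // => i _; rewrite mxE mul0r.
rewrite dotvE psumr_eq0 => [/allP u0|i _]; last by rewrite -expr2 sqr_ge0.
apply/eqP/rowP => i; rewrite mxE.
have /u0 : i \in index_enum 'I_n by rewrite mem_index_enum.
by rewrite /= -expr2 sqrf_eq0 => /eqP.
Qed.

Lemma vnorm2 u : vnorm u ^+ 2 = dotv u u.
Proof. by rewrite /vnorm sqr_sqrtr // dotv_ge0. Qed.

Lemma vnorm_ltE u c : 0 < c -> (vnorm u < c) = (dotv u u < c ^+ 2).
Proof. by move=> c0; rewrite -vnorm2 ltr_pXn2r // nnegrE ?sqrtr_ge0 ?ltW. Qed.

Lemma dotv_polar (P Q S T : 'rV[R]_n) :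
  dotv (P - Q) (S - T) = (dotv (P - T) (P - T) + dotv (Q - S) (Q - S)
     - dotv (P - S) (P - S) - dotv (Q - T) (Q - T)) / 2.
Proof.
rewrite !dotvE -big_split -!sumrB mulr_suml; apply: eq_bigr => i _.
by rewrite /= !mxE; field.
Qed.

Lemma isometry_dotv (psi : 'rV[R]_n -> 'rV[R]_n) (P Q S T : 'rV[R]_n) :
  is_isometry psi -> dotv (psi P - psi Q) (psi S - psi T) = dotv (P - Q) (S - T).
Proof. by move=> iso; rewrite dotv_polar [RHS]dotv_polar -!vnorm2 !iso. Qed.

Lemma in_aplane_dotv k (p : 'rV[R]_n) (V : 'M[R]_(k, n)) x y u :
  in_aplane p V x -> in_aplane p V y -> V *m u^T = 0 -> dotv (x - y) u = 0.
Proof.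
move=> /submxP[Dx ex] /submxP[Dy ey] Vu.
have -> : x - y = (Dx - Dy) *m V by rewrite mulmxBl -ex -ey opprB addrA subrK.
by rewrite /dotv -mulmxA Vu mulmx0 mxE.
Qed.

End DotProduct.

Section Reflections.
Variables (R : realType) (n : nat).
Implicit Types (b u y : 'rV[R]_n) (x : ext R n).

Lemma sphere_refl_some b (R0 : R) y : y != b ->
  sphere_refl b R0 (Some y) =
  Some (b + (R0 ^+ 2 / dotv (y - b) (y - b)) *: (y - b)).
Proof. by move=> /negbTE yb /=; rewrite yb vnorm2. Qed.

Lemma sphere_reflK b (R0 : R) x : R0 != 0 ->
  sphere_refl b R0 (sphere_refl b R0 x) = x.
Proof.
move=> R00; case: x => [y|] /=; last by rewrite eqxx.
have [->|yb] := eqVneq y b; first by [].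
set W := dotv (y - b) (y - b); set s := R0 ^+ 2 / W.
have W0 : W != 0 by rewrite dotv_eq0 subr_eq0.
have s0 : s != 0 by rewrite mulf_neq0 ?invr_eq0 ?expf_neq0.
have sy : b + s *: (y - b) - b = s *: (y - b) by rewrite addrC addKr.
have syb : b + s *: (y - b) != b.
  by rewrite -subr_eq0 sy scaler_eq0 negb_or s0 subr_eq0.
rewrite vnorm2 -/W -/s /= (negbTE syb) vnorm2 sy dotvZl dotvZr -/W scalerA.
have -> : R0 ^+ 2 / (s * (s * W)) * s = 1 by rewrite /s; field; rewrite W0 R00.
by rewrite scale1r addrC subrK.
Qed.

Lemma plane_reflK u (t : R) x : u != 0 -> plane_refl u t (plane_refl u t x) = x.
Proof.
move=> u0; case: x => [y|] //=; congr Some.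
have uu0 : dotv u u != 0 by rewrite dotv_eq0.
rewrite dotvBl dotvZl; set c := 2 * (dotv y u - t) / dotv u u.
have -> : 2 * (dotv y u - c * dotv u u - t) / dotv u u = - c by rewrite /c; field.
by rewrite scaleNr opprK subrK.
Qed.

Lemma refl_applyK (d : refl_data R n) x :
  refl_valid d -> refl_apply d (refl_apply d x) = x.
Proof.
case: d => [b R0|u t] /= valid; last exact: plane_reflK.
by apply: sphere_reflK; rewrite gt_eqF.
Qed.

Lemma mobius_surj (phi : ext R n -> ext R n) : is_mobius phi ->
  forall x, exists w, phi w = x.
Proof.
move=> [l [_ valid phiE]] x.
suff [w wx] : exists w, foldr (fun d f => refl_apply d \o f) id l w = x.
  by exists w; rewrite phiE.
elim: l valid x {phiE} => [|d l IH] /=; first by move=> _ x; exists x.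
move=> /andP[vd vl] x; have [w wx] := IH vl (refl_apply d x).
by exists w; rewrite /= wx refl_applyK.
Qed.

End Reflections.

Lemma ltr_refl_norm2 (R : realFieldType) (B D K r : R) :
  0 < B -> 0 < K -> 0 <= D -> r ^+ 2 < B ->
  (B ^+ 2 * D / (B * D + K) < r ^+ 2) = (D < K * r ^+ 2 / (B * (B - r ^+ 2))).
Proof.
move=> B0 K0 D0 rB.
have BDK : 0 < B * D + K := ltr_wpDl (mulr_ge0 (ltW B0) D0) K0.
rewrite ltr_pdivrMr // ltr_pdivlMr ?mulr_gt0 ?subr_gt0 //.
by rewrite -subr_gt0 -[RHS]subr_gt0; congr (0 < _); ring.
Qed.

Section IsometricSphere.
Variables (R : realType) (n : nat) (b a : 'rV[R]_n) (R0 : R).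
Hypotheses (b0 : b != 0) (R00 : 0 < R0).
Hypothesis sigma0 : sphere_refl b R0 (Some 0) = Some a.

Local Notation B := (dotv b b).

Lemma dotv_gt0 : 0 < B.
Proof. by rewrite lt_def dotv_eq0 b0 dotv_ge0. Qed.

Lemma sphere_refl0E : a = b - (R0 ^+ 2 / B) *: b.
Proof.
by move: sigma0; rewrite sphere_refl_some ?(eq_sym 0) // sub0r dotvNN scalerN => -[].
Qed.

Lemma sphere_refl_inv0 : sphere_refl b R0 (Some a) = Some 0.
Proof. by rewrite -sigma0 sphere_reflK // gt_eqF. Qed.

Section OnHyperplane.
Variable v : 'rV[R]_n.
Hypothesis v_ortho : dotv (v - a) b = 0.

Local Notation D := (dotv (v - a) (v - a)).

Lemma subv_pole : v - b = (v - a) - (R0 ^+ 2 / B) *: b.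
Proof. by rewrite sphere_refl0E opprB addrA addrAC addrK. Qed.

Lemma dotv_pole : dotv b (v - b) = - R0 ^+ 2.
Proof.
rewrite subv_pole dotvBr dotvZr dotvC v_ortho sub0r; congr (- _).
by field; rewrite gt_eqF ?dotv_gt0.
Qed.

Lemma hyperplane_neq_pole : v != b.
Proof.
apply: contra_eqN dotv_pole => /eqP->; rewrite dotvBr subrr.
by rewrite eq_sym oppr_eq0 expf_neq0 // gt_eqF.
Qed.

Lemma dotv_subv_pole : dotv (v - b) (v - b) = D + R0 ^+ 4 / B.
Proof.
rewrite subv_pole dotv_sqrBZ v_ortho.
by field; rewrite gt_eqF ?dotv_gt0.
Qed.

Lemma sphere_refl_hyperplane_norm2 y : sphere_refl b R0 (Some v) = Some y ->
  dotv y y = B ^+ 2 * D / (B * D + R0 ^+ 4).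
Proof.
rewrite sphere_refl_some ?hyperplane_neq_pole // => -[<-].
have K0 : 0 < R0 ^+ 4 by rewrite exprn_gt0.
rewrite dotv_sqrDZ dotv_pole dotv_subv_pole.
have BDK : B * D + R0 ^+ 4 != 0.
  by rewrite gt_eqF // ltr_wpDl ?mulr_ge0 ?dotv_ge0 ?ltW ?dotv_gt0.
by field; rewrite BDK !gt_eqF ?dotv_gt0.
Qed.

Lemma ball_sphere_refl_hyperplane (r : R) y : 0 < r -> r < vnorm b ->
  sphere_refl b R0 (Some v) = Some y ->
  vnorm y < r <->
  vnorm (v - a) < R0 ^+ 2 * r / (vnorm b * Num.sqrt (vnorm b ^+ 2 - r ^+ 2)).
Proof.
move=> r0 rb vy.
have rB : r ^+ 2 < B by rewrite -vnorm2 ltrXn2r // ltW.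
have Br : 0 < B - r ^+ 2 by rewrite subr_gt0.
have rho0 : 0 < R0 ^+ 2 * r / (vnorm b * Num.sqrt (vnorm b ^+ 2 - r ^+ 2)).
  by rewrite divr_gt0 ?mulr_gt0 ?exprn_gt0 ?sqrtr_gt0 ?vnorm2 ?dotv_gt0.
rewrite vnorm_ltE // vnorm_ltE // (sphere_refl_hyperplane_norm2 vy).
rewrite ltr_refl_norm2 ?exprn_gt0 ?dotv_ge0 ?dotv_gt0 //.
by rewrite exprMn exprVn !exprMn vnorm2 sqr_sqrtr ?ltW // -exprD.
Qed.

End OnHyperplane.

End IsometricSphere.

Theorem mainTheorem7 (R : realType) (n k : nat)
  (phi : ext R n -> ext R n) (b : 'rV[R]_n) (R0 : R)
  (psi : 'rV[R]_n -> 'rV[R]_n) (a : 'rV[R]_n)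
  (p : 'rV[R]_n) (V : 'M[R]_(k, n)) (r : R) :
  is_mobius phi ->
  phi (Some b) = None ->
  b != 0 ->
  (* S^{n-1}(b,R0) is the isometric sphere: phi = psi o sigma *)
  0 < R0 -> is_isometry psi ->
  (forall x, phi x = ext_map psi (sphere_refl b R0 x)) ->
  (* a = sigma(0) *)
  sphere_refl b R0 (Some 0) = Some a ->
  (* Sigma_0 = p + rowspace V is a k-dimensional affine plane *)
  row_free V ->
  (* containing phi(0) *)
  (forall y, phi (Some 0) = Some y -> in_aplane p V y) ->
  (* orthogonal to phi(infinity) - phi(a) *)
  (forall y z, phi None = Some y -> phi (Some a) = Some z ->
     V *m (y - z)^T = 0) ->
  0 < r -> r < vnorm b ->
  (* Sigma_0 /\ phi(B^n_r) is a flat k-disk of the given radius *)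
  exists2 c : 'rV[R]_n, in_aplane p V c &
    forall x : 'rV[R]_n,
      (in_aplane p V x /\ exists2 y, ball0 r y & phi (Some y) = Some x) <->
      (in_aplane p V x /\
       vnorm (x - c) < R0 ^+ 2 * r /
                        (vnorm b * Num.sqrt (vnorm b ^+ 2 - r ^+ 2))).
Proof.
move=> mob _ b0 R00 iso phiE sigma0 _ plane0 plane_ortho r0 rb.
have phi0 : phi (Some 0) = Some (psi a) by rewrite phiE sigma0.
have Vb : V *m (psi b - psi 0)^T = 0.
  by apply: plane_ortho; rewrite phiE ?(sphere_refl_inv0 R00 sigma0).
have ortho v : in_aplane p V (psi v) -> dotv (v - a) b = 0.
  move=> pv; rewrite -[b]subr0 -(isometry_dotv v a b 0 iso).
  exact: in_aplane_dotv pv (plane0 _ phi0) Vb.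
have disk y v : sphere_refl b R0 (Some y) = Some v -> in_aplane p V (psi v) ->
    ball0 r y <-> vnorm (psi v - psi a) < R0 ^+ 2 * r /
                        (vnorm b * Num.sqrt (vnorm b ^+ 2 - r ^+ 2)).
  move=> yv /ortho va; rewrite iso.
  apply: (ball_sphere_refl_hyperplane b0 R00 sigma0 va r0 rb).
  by rewrite -yv sphere_reflK // gt_eqF.
exists (psi a); first exact: plane0.
move=> x; split=> -[px xP]; split=> //.
- case: xP => y yr; rewrite phiE.
  case yv: (sphere_refl _ _ _) => [v|] //= -[vx]; subst x.
  by rewrite -(disk y v yv px).
- have [w] := mobius_surj mob (Some x); rewrite phiE.
  case: (sphere_refl _ _ w) => [v|] //= -[vx]; subst x.
  have vb := hyperplane_neq_pole b0 R00 sigma0 (ortho v px).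
  case vy: (sphere_refl b R0 (Some v)) => [y|]; last by rewrite /= (negbTE vb) in vy.
  have yv : sphere_refl b R0 (Some y) = Some v by rewrite -vy sphere_reflK ?gt_eqF.
  by exists y; [rewrite (disk y v yv px) | rewrite phiE yv].
Qed.
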